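(* Let $d\ge 2$ and let $\mathfrak{F}$ be an ordered field or a field that has more than two elements. Let $\mathcal{G}$ and $\mathcal{G}'$ be FFD coordinate geometries over $\mathfrak{F}$ (of dimension $d$). Then: (i) $\mathrm{Co}(\mathcal{G})\subseteq\mathrm{Co}(\mathcal{G}')$ if and only if $\mathrm{Aut}(\mathcal{G})\supseteq\mathrm{Aut}(\mathcal{G}')$; (ii) $\mathrm{Co}(\mathcal{G})\subseteq\mathrm{Co}(\mathcal{G}')$ if and only if $\mathrm{AffAut}(\mathcal{G})\supseteq\mathrm{AffAut}(\mathcal{G}')$.
   Context: A field is $\langle F,+,\cdot,0,1\rangle$; an ordered field is $\langle F,+,\cdot,0,1,\le\rangle$. ''Definable'' means first-order definable without parameters. For a model $\mathfrak{M}$, $\mathrm{Co}(\mathfrak{M})$ is the set of all relations (of all finite arities $n\ge1$) on its universe that are definable in $\mathfrak{M}$, and $\mathrm{Aut}(\mathfrak{M})$ its automorphism group. For points of $F^d$: ${\mathsf{Col}}(\vec p,\vec q,\vec r)$ iff $\vec q=\vec p+\lambda(\vec r-\vec p)$ for some $\lambda\in F$ or $\vec r=\vec p$; for an ordered field, ${\mathsf{Bw}}(\vec p,\vec q,\vec r)$ iff $\vec q=\vec p+\lambda(\vec r-\vec p)$ for some $\lambda\in F$ with $0\le\lambda\le1$. An $n$-ary relation $\mathsf{R}$ on $F^d$ is definable over $\mathfrak{F}$ iff the corresponding $dn$-ary relation on $F$ obtained by listing coordinates of the $n$ points consecutively is definable in $\mathfrak{F}$. A coordinate geometry over a field (resp.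 ordered field) $\mathfrak{F}$ is a model with universe $F^d$, only relation symbols in its language, in which ${\mathsf{Col}}$ (resp. ${\mathsf{Bw}}$) is definable. It is FFD if it has finitely many relations, each definable over $\mathfrak{F}$. An affine transformation of $F^d$ is a composition of an invertible linear map followed by a translation; $\mathrm{AffAut}(\mathcal{G})=\mathrm{Aut}(\mathcal{G})\cap\{\text{affine transformations}\}$. *)

From HB Require Import structures.
From mathcomp Require Import all_boot all_order all_algebra.
Set Implicit Arguments. Unset Strict Implicit. Unset Printing Implicit Defensive.
Import Order.TTheory GRing.Theory Num.Theory.
Local Open Scope ring_scope.

(* No constants other than 0 and 1: definability is parameter-free.    *)
Inductive fterm : Type :=
| FVar of nat | FZero | FOne | FAdd of fterm & fterm | FMul of fterm & fterm.

Inductive fform : Type :=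
| FEq of fterm & fterm
| FLe of fterm & fterm          (* only allowed in the ordered-field language *)
| FFalse
| FImp of fform & fform
| FForall of nat & fform.

Fixpoint le_free (f : fform) : bool :=
  match f with
  | FLe _ _ => false
  | FImp a b => le_free a && le_free b
  | FForall _ a => le_free a
  | _ => true
  end.

Definition upd {T : Type} (e : nat -> T) (n : nat) (x : T) : nat -> T :=
  fun m => if m == n then x else e m.

Section FieldSemantics.
Variable F : fieldType.
(* [ole = Some le]: ordered field with order [le]; [ole = None]: field. *)
Variable ole : option (rel F).

Fixpoint feval (e : nat -> F) (t : fterm) : F :=
  match t with
  | FVar n => e n
  | FZero => 0
  | FOne => 1
  | FAdd a b => feval e a + feval e b
  | FMul a b => feval e a * feval e b
  end.

Fixpoint fholds (e : nat -> F) (f : fform) : Prop :=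
  match f with
  | FEq a b => feval e a = feval e b
  | FLe a b => match ole with Some le => le (feval e a) (feval e b) | None => False end
  | FFalse => False
  | FImp a b => fholds e a -> fholds e b
  | FForall n a => forall x : F, fholds (upd e n x) a
  end.

Definition allowed (f : fform) : bool :=
  match ole with Some _ => true | None => le_free f end.

(* an n-ary relation on F^d is definable over the (ordered) field iff the
   dn-ary relation on F obtained by listing the coordinates of the n points
   consecutively (point k, coordinate j  |->  variable k*d+j) is definable *)
Definition Fdefinable_pts (d n : nat) (R : ('I_n -> 'rV[F]_d) -> Prop) : Prop :=
  exists f : fform, allowed f /\
    forall e : nat -> F,
      R (fun k : 'I_n => \row_(j < d) e (k * d + j)%N) <-> fholds e f.

End FieldSemantics.

Inductive gform (I : Type) (ar : I -> nat) : Type :=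
| GEq of nat & nat
| GRel (i : I) of ('I_(ar i) -> nat)
| GFalse
| GImp of gform ar & gform ar
| GForall of nat & gform ar.

Arguments GFalse {I ar}.

Record geometry (F : fieldType) (d : nat) := Geometry {
  gI : finType;
  gar : gI -> nat;
  grel : forall i : gI, ('I_(gar i) -> 'rV[F]_d) -> Prop
}.

Section GeomSemantics.
Variables (F : fieldType) (d : nat) (G : geometry F d).

Fixpoint gholds (e : nat -> 'rV[F]_d) (f : gform (@gar F d G)) : Prop :=
  match f with
  | GEq x y => e x = e y
  | GRel i args => grel (e \o args)
  | GFalse => False
  | GImp a b => gholds e a -> gholds e b
  | GForall n a => forall x : 'rV[F]_d, gholds (upd e n x) a
  end.

(* parameter-free definability in G *)
Definition Gdefinable (n : nat) (R : ('I_n -> 'rV[F]_d) -> Prop) : Prop :=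
  exists f : gform (@gar F d G),
    forall e : nat -> 'rV[F]_d, R (fun k : 'I_n => e k) <-> gholds e f.

Definition Aut (f : 'rV[F]_d -> 'rV[F]_d) : Prop :=
  bijective f /\
  forall (i : gI G) (args : 'I_(gar i) -> 'rV[F]_d),
    grel args <-> grel (f \o args).

End GeomSemantics.

(* Co(G) ⊆ Co(G') : every relation (arity n >= 1) definable in G is
   definable in G' *)
Definition Co_sub (F : fieldType) (d : nat) (G G' : geometry F d) : Prop :=
  forall (n : nat), (0 < n)%N ->
    forall R : ('I_n -> 'rV[F]_d) -> Prop, Gdefinable G R -> Gdefinable G' R.

Definition Aut_sup (F : fieldType) (d : nat) (G G' : geometry F d) : Prop :=
  forall f, Aut G' f -> Aut G f.

(* affine transformations: invertible linear map followed by translation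
   (points are row vectors, linear maps act on the right) *)
Definition affine (F : fieldType) (d : nat) (f : 'rV[F]_d -> 'rV[F]_d) : Prop :=
  exists (A : 'M[F]_d) (b : 'rV[F]_d),
    A \in unitmx /\ forall x, f x = x *m A + b.

Definition AffAut (F : fieldType) (d : nat) (G : geometry F d) f : Prop :=
  Aut G f /\ affine f.

Definition AffAut_sup (F : fieldType) (d : nat) (G G' : geometry F d) : Prop :=
  forall f, AffAut G' f -> AffAut G f.

Definition Col (F : fieldType) (d : nat) (p q r : 'rV[F]_d) : Prop :=
  (exists l : F, q = p + l *: (r - p)) \/ r = p.

Definition Bw (F : fieldType) (le : rel F) (d : nat) (p q r : 'rV[F]_d) : Prop :=
  exists l : F, le 0 l /\ le l 1 /\ q = p + l *: (r - p).

Definition rel3 (T : Type) (P : T -> T -> T -> Prop) : ('I_3 -> T) -> Prop :=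
  fun v => P (v (@Ordinal 3 0 isT)) (v (@Ordinal 3 1 isT)) (v (@Ordinal 3 2 isT)).

Definition coord_geom (F : fieldType) (ole : option (rel F)) (d : nat)
  (G : geometry F d) : Prop :=
  match ole with
  | Some le => Gdefinable G (rel3 (@Bw F le d))
  | None => Gdefinable G (rel3 (@Col F d))
  end.

Definition FFD (F : fieldType) (ole : option (rel F)) (d : nat)
  (G : geometry F d) : Prop :=
  coord_geom ole G /\ forall i : gI G, Fdefinable_pts ole (@grel F d G i).

(* Automorphisms preserve every definable relation, so Co(G) ⊆ Co(G') gives
   Aut(G) ⊇ Aut(G'), hence AffAut(G) ⊇ AffAut(G').  Conversely, let R be defined in G
   by phi.  In G' collinearity is definable (from betweenness in the ordered case); for
   d >= 2 and a scalar t0 outside {0, 1} this yields parallelism, translations and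
   homotheties, and with them addition, multiplication (and order) on any line [o u]:
   field formulas become formulas of G' about points of that line.  So G' can say
   "there is an affine frame whose coordinate map S is an automorphism of G' (checked on
   the field definitions of the relations of G'), and phi holds after replacing each
   relation of G by its field definition in S-coordinates".  Such an S is in
   AffAut(G') ⊆ AffAut(G), so the second clause is equivalent to phi itself, and the
   standard frame witnesses the first clause. *)

From mathcomp Require Import all_boot all_order all_algebra.
From mathcomp Require Import zify ring lra.
From Stdlib Require Import Classical FunctionalExtensionality IndefiniteDescription.
Import Order.TTheory GRing.Theory Num.Theory.

Set Implicit Arguments. Unset Strict Implicit. Unset Printing Implicit Defensive.
Local Open Scope ring_scope.
Local Arguments GEq {I ar} _ _.

Lemma upd_same (T : Type) (e : nat -> T) n x : upd e n x n = x.
Proof. by rewrite /upd eqxx. Qed.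

Lemma upd_ne (T : Type) (e : nat -> T) n x m : m <> n -> upd e n x m = e m.
Proof. by rewrite /upd => /eqP/negbTE ->. Qed.

Ltac upd_simpl := repeat match goal with
  | |- context[upd ?e ?n ?x ?n] => rewrite (@upd_same _ e n x)
  | |- context[upd ?e ?n ?x ?m] => rewrite (@upd_ne _ e n x m); [|lia]
  end.

Definition upd_block (T : Type) (e : nat -> T) (Z m : nat) (g : nat -> T) : nat -> T :=
  fun v => if (Z <= v < Z + m)%N then g v else e v.

Lemma upd_block_out (T : Type) (e : nat -> T) Z m g v :
  ~~ (Z <= v < Z + m)%N -> upd_block e Z m g v = e v.
Proof. by rewrite /upd_block => /negbTE ->. Qed.

Lemma upd_block_in (T : Type) (e : nat -> T) Z m g v :
  (Z <= v < Z + m)%N -> upd_block e Z m g v = g v.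
Proof. by rewrite /upd_block => ->. Qed.

Lemma upd_block0 (T : Type) (e : nat -> T) Z g : upd_block e Z 0 g = e.
Proof. by apply: functional_extensionality => v; apply: upd_block_out; lia. Qed.

Lemma upd_blockS (T : Type) (e : nat -> T) Z m g x :
  upd_block (upd e Z x) Z.+1 m g = upd_block e Z m.+1 (upd g Z x).
Proof.
apply: functional_extensionality => v; rewrite /upd_block /upd.
by case: (ltngtP v Z) => [vZ|vZ|->]; do 2?case: ifP; rewrite ?eqxx //; lia.
Qed.

Section Connectives.
Variables (F : fieldType) (d : nat) (G : geometry F d).
Local Notation pt := 'rV[F]_d.
Local Notation gf := (gform (@gar F d G)).
Implicit Types (e : nat -> pt) (a b : gf).

Definition GNot a : gf := GImp a GFalse.
Definition GAnd a b : gf := GNot (GImp a (GNot b)).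
Definition GOr a b : gf := GImp (GNot a) b.
Definition GIff a b : gf := GAnd (GImp a b) (GImp b a).
Definition GEx n a : gf := GNot (GForall n (GNot a)).

Lemma gholds_forall e n a : gholds e (GForall n a) <-> forall x, gholds (upd e n x) a.
Proof. by []. Qed.

Lemma gholds_and e a b : gholds e (GAnd a b) <-> gholds e a /\ gholds e b.
Proof. by case: (classic (gholds e a)); case: (classic (gholds e b)); rewrite /=; tauto. Qed.

Lemma gholds_or e a b : gholds e (GOr a b) <-> gholds e a \/ gholds e b.
Proof. by case: (classic (gholds e a)); case: (classic (gholds e b)); rewrite /=; tauto. Qed.

Lemma gholds_iff e a b : gholds e (GIff a b) <-> (gholds e a <-> gholds e b).
Proof. by rewrite gholds_and. Qed.

Lemma gholds_ex e n a : gholds e (GEx n a) <-> exists x, gholds (upd e n x) a.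
Proof.
split=> [H|[x Hx] H]; last exact: H x Hx.
by apply: NNPP => H'; apply: H => x Hx; apply: H'; exists x.
Qed.

Fixpoint GBigAnd (T : eqType) (s : seq T) (f : T -> gf) : gf :=
  if s is x :: s' then GAnd (f x) (GBigAnd s' f) else GNot GFalse.

Lemma gholds_bigand (T : eqType) e (s : seq T) f :
  gholds e (GBigAnd s f) <-> forall x, x \in s -> gholds e (f x).
Proof.
elim: s => [|x s IH]; first by split=> // _ x.
rewrite -[GBigAnd _ _]/(GAnd (f x) (GBigAnd s f)) gholds_and IH; split=> [[Hx Hs] y|H].
  by rewrite in_cons => /predU1P [->|/Hs].
by split=> [|y Hy]; apply: H; rewrite in_cons ?eqxx // Hy orbT.
Qed.

Fixpoint GForallBlock (Z m : nat) a : gf :=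
  if m is m'.+1 then GForall Z (GForallBlock Z.+1 m' a) else a.

Definition GExBlock (Z m : nat) a : gf := GNot (GForallBlock Z m (GNot a)).

Lemma gholds_forall_block Z m a e :
  gholds e (GForallBlock Z m a) <-> forall g, gholds (upd_block e Z m g) a.
Proof.
elim: m Z e => [|m IH] Z e; first by split=> [H g|/(_ e)]; rewrite upd_block0.
rewrite [GForallBlock _ _ _]/= gholds_forall.
split=> [H g|H x]; last by apply/IH => g; rewrite upd_blockS.
have -> : g = upd g Z (g Z).
  by apply: functional_extensionality => v; rewrite /upd; case: eqP => [->|].
by rewrite -upd_blockS; move: (H (g Z)); rewrite IH.
Qed.

Lemma gholds_ex_block Z m a e :
  gholds e (GExBlock Z m a) <-> exists g, gholds (upd_block e Z m g) a.
Proof.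
rewrite /GExBlock /= gholds_forall_block; split=> [H|[g Hg] H]; last exact: H g Hg.
by apply: NNPP => H'; apply: H => g Hg; apply: H'; exists g.
Qed.

Fixpoint grename (s : nat -> nat) a : gf :=
  match a with
  | GEq x y => GEq (s x) (s y)
  | GRel i args => GRel (s \o args)
  | GFalse => GFalse
  | GImp a b => GImp (grename s a) (grename s b)
  | GForall n a => GForall (s n) (grename s a)
  end.

Lemma gholds_rename s (s_inj : injective s) a e :
  gholds e (grename s a) <-> gholds (e \o s) a.
Proof.
elim: a e => [x y|i args||a IHa b IHb|n a IH] e //=; first by rewrite IHa IHb.
have upd_comp x : upd e (s n) x \o s = upd (e \o s) n x.
  by apply: functional_extensionality => m; rewrite /upd /= (inj_eq s_inj).
by split=> H x; move: (H x); rewrite IH upd_comp.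
Qed.

Lemma gholds_Aut f : Aut G f -> forall a e, gholds e a <-> gholds (f \o e) a.
Proof.
case=> [[g fK gK] f_rel] a.
elim: a => [x y|i args||a IHa b IHb|n a IH] e /=.
- by split=> [->|/(can_inj fK)].
- exact: f_rel.
- by [].
- by rewrite IHa IHb.
have upd_comp x : f \o upd e n x = upd (f \o e) n (f x).
  by apply: functional_extensionality => m; rewrite /upd /=; case: eqP.
by split=> H x; [rewrite -(gK x) -upd_comp -IH | rewrite IH upd_comp].
Qed.

Fixpoint gform_varbound a : nat :=
  match a with
  | GEq x y => maxn x.+1 y.+1
  | GRel i args => \max_(k : 'I_(gar i)) (args k).+1
  | GFalse => 0
  | GImp a b => maxn (gform_varbound a) (gform_varbound b)
  | GForall n a => maxn n.+1 (gform_varbound a)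
  end.

End Connectives.

Arguments GEx : simpl never.
Arguments GAnd : simpl never.
Arguments GOr : simpl never.
Arguments GNot : simpl never.
Arguments GIff : simpl never.

Ltac vring := apply/rowP => ?; rewrite !mxE; ring.
Ltac vfield := apply/rowP => ?; rewrite !mxE; field; repeat (apply/andP; split); done.

Section AffineGeometry.
Variables (F : fieldType) (d : nat).
Local Notation pt := 'rV[F]_d.
Local Notation Col := (@Col F d).
Implicit Types (a b c k o p q r u w x y z : pt).

Lemma ColP p q r : r <> p -> Col p q r <-> exists l, q = p + l *: (r - p).
Proof. by move=> rp; split=> [[]|] //; left. Qed.

Lemma Col_on_line p q r l : q = p + l *: (r - p) -> Col p q r.
Proof. by move=> ->; left; exists l. Qed.

Lemma Col_same12 p q : Col p p q.
Proof. by apply: (Col_on_line (l := 0)); rewrite scale0r addr0. Qed.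

Lemma Col_same23 p q : Col p q q.
Proof. by apply: (Col_on_line (l := 1)); rewrite scale1r addrC subrK. Qed.

Lemma ncol_neq p q r : ~ Col p q r -> [/\ r <> p, q <> p & q <> r].
Proof.
move=> H; split=> E; apply: H; subst; [by right | exact: Col_same12 | exact: Col_same23].
Qed.

Lemma eq_lincomb x y p q (c : F) : x = y -> p - q = c *: (x - y) -> p = q.
Proof. by move=> ->; rewrite subrr scaler0 => /eqP; rewrite subr_eq0 => /eqP. Qed.

Lemma ncol_free p q r (a b : F) :
  ~ Col p q r -> a *: (q - p) + b *: (r - p) = 0 -> a = 0 /\ b = 0.
Proof.
move=> H E; have [rp _ _] := ncol_neq H.
have a0 : a = 0.
  apply: NNPP => /eqP a0; apply: H; apply: (Col_on_line (l := - (b / a))).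
  have Ea : a *: (q - p) = - (b *: (r - p)) by apply/eqP; rewrite -addr_eq0 E.
  have -> : q = p + a^-1 *: (a *: (q - p)) by rewrite scalerA mulVf // scale1r addrC subrK.
  by rewrite Ea scalerN scalerA mulrC scaleNr.
split=> //; move: E; rewrite a0 scale0r add0r => /eqP; rewrite scaler_eq0 subr_eq0.
by case/orP=> /eqP.
Qed.

Lemma exists_ncol (d_gt1 : (1 < d)%N) p q : q <> p -> exists w, ~ Col p w q.
Proof.
move=> qp; pose i0 : 'I_d := Ordinal (ltnW d_gt1); pose i1 : 'I_d := Ordinal d_gt1.
case: (classic (Col p (p + 'e_i0) q)) => [H0|]; last by exists (p + 'e_i0).
case: (classic (Col p (p + 'e_i1) q)) => [H1|]; last by exists (p + 'e_i1).
exfalso; move/(ColP _ qp): H0 => [l0]; move/(ColP _ qp): H1 => [l1].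
move/(congr1 (fun v => v - p)) => E1; move/(congr1 (fun v => v - p)) => E0.
rewrite ![p + _ - p]addrC !addKr in E0 E1.
have l0_neq0 : l0 != 0.
  apply/eqP=> l0z; move/rowP: E0 => /(_ i0); rewrite l0z scale0r !mxE eqxx.
  by move/eqP; rewrite oner_eq0.
have : 'e_i1 = (l1 / l0) *: 'e_i0 :> pt by rewrite E0 E1 scalerA mulfVK.
move/rowP=> /(_ i1); rewrite !mxE eqxx.
have -> : (i1 == i0) = false by apply/eqP => /(congr1 val).
by rewrite mulr0 => /eqP; rewrite oner_eq0.
Qed.

(* Parallelism expressed through collinearity alone: [a b] is parallel to [c k]
   iff both lie on [c k], or [a b] is coplanar with [c k] and does not meet it. *)
Definition InPlane c k a b :=
  b = c \/ exists p q, Col c p k /\ Col c q a /\ p <> q /\ Col p b q.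

Definition Par a b c k := (Col c a k /\ Col c b k) \/
  (~ Col c a k /\ (b = a \/ (InPlane c k a b /\ ~ (exists z, Col c z k /\ Col a z b)))).

Lemma Par_col a b c k : k <> c -> Col c a k ->
  Par a b c k <-> exists m, b - a = m *: (k - c).
Proof.
move=> kc Ha; move/(ColP _ kc): (Ha) => [al Ea]; split.
  case=> [[_ /(ColP _ kc) [be Eb]]|[]//].
  by exists (be - al); subst; vring.
case=> m Em; left; split=> //; apply: (Col_on_line (l := al + m)).
by apply: (eq_lincomb (c := -1) (esym Em)); rewrite Ea; vring.
Qed.

Lemma InPlane_par_or_meet a b c k : k <> c -> ~ Col c a k -> InPlane c k a b ->
  (exists m, b - a = m *: (k - c)) \/ (exists z, Col c z k /\ Col a z b).
Proof.
move=> kc Ha [->|[p [q [Hp [Hq [pq Hb]]]]]].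
  by right; exists c; split; [exact: Col_same12 | exact: Col_same23].
have [_ ac _] := ncol_neq Ha.
move/(ColP _ kc): Hp => [s Ep]; move/(ColP _ ac): Hq => [r Eq].
move/(ColP _ (nesym pq)): Hb => [t Eb].
case: (eqVneq (t * r) 1) => [tr1|tr1].
  have t_neq0 : t != 0.
    by apply/eqP => t0'; move: tr1; rewrite t0' mul0r => /eqP; rewrite eq_sym oner_eq0.
  have Er : r = t^-1 by apply: (mulfI t_neq0); rewrite tr1 mulfV.
  by left; exists ((1 - t) * s); subst; vfield.
have tr1' : 1 - t * r != 0 by rewrite subr_eq0 eq_sym.
right; exists (a + (1 - t * r)^-1 *: (b - a)); split; last exact: Col_on_line.
by apply: (Col_on_line (l := (1 - t * r)^-1 * ((1 - t) * s))); subst; vfield.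
Qed.

Lemma par_nmeet a b c k m : k <> c -> ~ Col c a k -> b - a = m *: (k - c) -> b <> a ->
  ~ exists z, Col c z k /\ Col a z b.
Proof.
move=> kc Ha Em ba [z [/(ColP _ kc) [s Ez] /(ColP _ ba) [l Ez']]].
apply: Ha; apply: (Col_on_line (l := s - l * m)).
rewrite Ez Em in Ez'; apply: (eq_lincomb (c := -1) Ez'); rewrite !scalerA; vring.
Qed.

(* Witnessing [InPlane] needs a scalar other than 0 and 1: over the two-element field
   lines have two points, and [InPlane c k a (a + k - c)] fails. *)
Variable t0 : F.
Hypotheses (t0_neq0 : t0 != 0) (t0_neq1 : t0 != 1).

(* [b] lies on the line through [c + m / (1 - t0) (k - c)] and [c + t0^-1 (a - c)]. *)
Lemma par_InPlane a b c k m : ~ Col c a k -> b - a = m *: (k - c) -> m != 0 ->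
  InPlane c k a b.
Proof.
move=> Ha Em m_neq0; have [kc ac _] := ncol_neq Ha.
have t1 : 1 - t0 != 0 by rewrite subr_eq0 eq_sym.
right; exists (c + (m / (1 - t0)) *: (k - c)), (c + t0^-1 *: (a - c)).
split; first exact: Col_on_line.
split; first exact: Col_on_line.
split.
  move/eqP; rewrite -subr_eq0 => /eqP E0.
  have [|/eqP] := @ncol_free c a k (- t0^-1) (m / (1 - t0)) Ha; first by rewrite -E0; vring.
  by rewrite oppr_eq0 invr_eq0 (negbTE t0_neq0).
by apply: (Col_on_line (l := t0)); apply: (eq_lincomb (c := 1) Em); vfield.
Qed.

Lemma ParP a b c k : k <> c -> Par a b c k <-> exists m, b - a = m *: (k - c).
Proof.
move=> kc; case: (classic (Col c a k)) => Ha; first exact: Par_col.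
split.
  case=> [[]//|[_ [->|[Hpl Hnm]]]]; first by exists 0; rewrite subrr scale0r.
  by case: (InPlane_par_or_meet kc Ha Hpl).
case=> m Em; right; split=> //.
case: (eqVneq m 0) => [m0|m_neq0].
  by left; apply/eqP; rewrite -subr_eq0 Em m0 scale0r.
have ba : b <> a.
  move=> E; move: Em; rewrite E subrr => /esym/eqP.
  by rewrite scaler_eq0 (negbTE m_neq0) subr_eq0 => /eqP.
by right; split; [exact: par_InPlane Em m_neq0 | exact: par_nmeet Em ba].
Qed.

Lemma Thales o u l x y lam : ~ Col o x u -> l = o + lam *: (u - o) ->
  (Col o y x /\ Par l y u x <-> y = o + lam *: (x - o)).
Proof.
move=> Hx El; have [uo xo xu] := ncol_neq Hx.
split=> [[/(ColP _ xo) [s Ey] /(ParP _ _ xu) [m Em]]|Ey].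
  have E0 : (s - m) *: (x - o) + (m - lam) *: (u - o) = (y - l) - m *: (x - u).
    by subst; vring.
  rewrite Em subrr in E0; have [/eqP h1 /eqP h2] := ncol_free Hx E0.
  by move: h1 h2; rewrite !subr_eq0 => /eqP h1 /eqP h2; subst.
split; first exact: (Col_on_line Ey).
by apply/(ParP _ _ xu); exists lam; subst; vring.
Qed.

Definition Homothety o u l x y :=
  (~ Col o x u /\ (Col o y x /\ Par l y u x)) \/
  (Col o x u /\ exists w w', ~ Col o w u /\
     ((Col o w' w /\ Par l w' u w) /\ (Col o y u /\ Par w' y w x))).

(* Off the line [o u] this is Thales; on it, pass through the image [w'] of an auxiliary
   point [w]. *)
Lemma HomothetyP (d_gt1 : (1 < d)%N) o u l x y lam : u <> o -> l = o + lam *: (u - o) ->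
  Homothety o u l x y <-> y = o + lam *: (x - o).
Proof.
move=> uo El; split.
  case=> [[Hx H]|[Hc [w [w' [Hw [Hw' [Hy1 Hy2]]]]]]]; first by rewrite -(Thales _ Hx El).
  rewrite (Thales _ Hw El) in Hw'; have [_ wo wu] := ncol_neq Hw.
  have xw : x <> w by move=> E; apply: Hw; rewrite -E.
  move/(ColP _ uo): Hc => [xi Ex]; move/(ColP _ uo): Hy1 => [et Ey].
  move/(ParP _ _ xw): Hy2 => [m Em].
  have E0 : (m - lam) *: (w - o) + (et - m * xi) *: (u - o) = (y - w') - m *: (x - w).
    by subst; vring.
  rewrite Em subrr in E0; have [/eqP h1 /eqP h2] := ncol_free Hw E0.
  by move: h1 h2; rewrite !subr_eq0 => /eqP h1 /eqP h2; subst; vring.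
move=> Ey; case: (classic (Col o x u)) => Hc; last by left; rewrite (Thales _ Hc El).
right; split=> //; have [w Hw] := exists_ncol d_gt1 uo.
exists w, (o + lam *: (w - o)); split=> //; split; first by rewrite (Thales _ Hw El).
have xw : x <> w by move=> E; apply: Hw; rewrite -E.
move/(ColP _ uo): (Hc) => [xi Ex].
split; first by apply: (Col_on_line (l := lam * xi)); subst; vring.
by apply/(ParP _ _ xw); exists lam; subst; vring.
Qed.

Definition Pgram a b c k := Par c k a b /\ Par b k a c.

Lemma PgramP a b c k : ~ Col a c b -> Pgram a b c k <-> k - c = b - a.
Proof.
move=> Hc; have [ba ca _] := ncol_neq Hc.
split=> [[/(ParP _ _ ba) [m Em] /(ParP _ _ ca) [n En]]|E].
  have E0 : (1 - n) *: (c - a) + (m - 1) *: (b - a) =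
            (k - b - n *: (c - a)) - (k - c - m *: (b - a)) by vring.
  rewrite Em En !subrr ?subr0 in E0; have [_ /eqP] := ncol_free Hc E0.
  by rewrite subr_eq0 Em => /eqP ->; rewrite scale1r.
split; first by apply/(ParP _ _ ba); exists 1; rewrite E scale1r.
by apply/(ParP _ _ ca); exists 1; apply: (eq_lincomb (c := 1) E); vring.
Qed.

Definition Transl a b c k :=
  (a = b /\ k = c) \/ ((~ Col a c b /\ Pgram a b c k) \/
  (a <> b /\ (Col a c b /\ exists w w', ~ Col a w b /\ (Pgram a b w w' /\ Pgram w w' c k)))).

Lemma transl_ncol a b c w w' : a <> b -> Col a c b -> ~ Col a w b -> w' - w = b - a ->
  ~ Col w c w'.
Proof.
move=> ab Hc Hw Ew Hc'.
have w'w : w' <> w.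
  by move=> E; apply: ab; apply/eqP; rewrite eq_sym -subr_eq0 -Ew E subrr.
move/(ColP _ (nesym ab)): Hc => [g Ec]; move/(ColP _ w'w): Hc' => [h Eh].
apply: Hw; apply: (Col_on_line (l := g - h)).
rewrite Ew in Eh; apply: (eq_lincomb (c := -1) Eh); subst; vring.
Qed.

(* For [c] on the line [a b], translate through a parallelogram on an auxiliary point [w]. *)
Lemma TranslP (d_gt1 : (1 < d)%N) a b c k : Transl a b c k <-> k - c = b - a.
Proof.
split.
  case=> [[-> ->]|[[Hc H]|[ab [Hc [w [w' [Hw [H1 H2]]]]]]]]; first by rewrite !subrr.
    by rewrite -(PgramP _ Hc).
  have Ew := (PgramP _ Hw).1 H1.
  by rewrite ((PgramP _ (transl_ncol ab Hc Hw Ew)).1 H2).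
move=> E; case: (eqVneq a b) => [ab|/eqP ab].
  by left; split=> //; apply/eqP; rewrite -subr_eq0 E ab subrr.
right; case: (classic (Col a c b)) => Hc; last by left; rewrite (PgramP _ Hc).
right; split=> //; split=> //.
have [w Hw] := exists_ncol d_gt1 (nesym ab).
have Ew : (w + (b - a)) - w = b - a by rewrite addrC addKr.
exists w, (w + (b - a)); split=> //; split; first by rewrite (PgramP _ Hw).
by rewrite (PgramP _ (transl_ncol ab Hc Hw Ew)) E.
Qed.

End AffineGeometry.

Section OrderedGeometry.
Variables (F : realFieldType) (d : nat).
Local Notation pt := 'rV[F]_d.
Local Notation Col := (@Col F d).
Local Notation Bw := (@Bw F (fun x y : F => x <= y) d).
Implicit Types (o p q r u c : pt).

Lemma Col_Bw p q r : Col p q r <-> r = p \/ (Bw p q r \/ (Bw p r q \/ Bw q p r)).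
Proof.
split.
  case=> [[l El]|]; last by left.
  case: (lerP 0 l) => l0.
    case: (lerP l 1) => l1; first by right; left; exists l.
    have l_gt0 : 0 < l := lt_trans ltr01 l1.
    have l_neq0 : l != 0 := lt0r_neq0 l_gt0.
    right; right; left; exists l^-1.
    split; first by rewrite invr_ge0 ltW.
    split; first by rewrite invf_le1 // ltW.
    by subst; vfield.
  right; right; right; exists (- l / (1 - l)).
  have h : 0 < 1 - l by rewrite subr_gt0 (lt_trans l0).
  split; first by rewrite divr_ge0 // ?oppr_ge0 ltW.
  split; first by rewrite ler_pdivrMr // mul1r; lra.
  by subst; apply/rowP => j; rewrite !mxE; field; exact: lt0r_neq0.
case=> [->|[[l [_ [_ El]]]|[[l [l0 [l1 El]]]|[l [l0 [l1 El]]]]]]; first by right.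
- exact: Col_on_line El.
- case: (eqVneq l 0) => [lz|l_neq0]; first by right; rewrite El lz scale0r addr0.
  by apply: (Col_on_line (l := l^-1)); subst; vfield.
- case: (eqVneq l 1) => [l1'|l_neq1]; first by right; rewrite El l1' scale1r addrC subrK.
  have h : 1 - l != 0 by rewrite subr_eq0 eq_sym.
  apply: (Col_on_line (l := - l / (1 - l))).
  by apply: (eq_lincomb (c := - (1 - l)^-1) El); vfield.
Qed.

Lemma Bw_nonneg o u c g : u <> o -> c = o + g *: (u - o) ->
  (Bw o c u \/ Bw o u c <-> 0 <= g).
Proof.
move=> uo Ec.
have coord_inj x y : o + x *: (u - o) = o + y *: (u - o) -> x = y.
  move/addrI/eqP; rewrite -subr_eq0 -scalerBl scaler_eq0 !subr_eq0 => /orP [/eqP //|].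
  by move/eqP.
split.
  case=> [[l [l0 [_ El]]]|[l [l0 [_ El]]]]; first by rewrite Ec in El; rewrite (coord_inj _ _ El).
  have /coord_inj lg : o + (l * g) *: (u - o) = o + 1 *: (u - o) by rewrite [in RHS]El Ec; vring.
  case: (lerP 0 g) => // g0.
  have : l * g <= 0 by rewrite mulr_ge0_le0 // ltW.
  by rewrite lg ler10.
move=> g0; case: (lerP g 1) => g1; first by left; exists g.
have g_neq0 : g != 0 := lt0r_neq0 (lt_trans ltr01 g1).
right; exists g^-1; split; first by rewrite invr_ge0.
split; first by rewrite invf_le1 ?(ltW g1) // (lt_trans ltr01 g1).
by rewrite Ec; vfield.
Qed.

End OrderedGeometry.

Section Frames.
Variables (F : fieldType) (d : nat).
Local Notation pt := 'rV[F]_d.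
Implicit Types (o x y : pt) (E : nat -> pt).

Definition frame_pt (o : pt) (E : nat -> pt) (y : pt) : pt :=
  o + \sum_(i < d) y 0 i *: (E i - o).

Definition frame_mx o E : 'M[F]_d := \matrix_i (E i - o).

Lemma frame_ptE o E y : frame_pt o E y = y *m frame_mx o E + o.
Proof.
rewrite /frame_pt mulmx_sum_row addrC; congr (_ + _); apply: eq_bigr => i _.
by rewrite rowK.
Qed.

Lemma frame_mx_unit o E : (forall x, exists y, x = frame_pt o E y) -> frame_mx o E \in unitmx.
Proof.
move=> surj; have [inv Hinv] : exists inv : 'I_d -> pt, forall i, inv i *m frame_mx o E = 'e_i.
  apply: (functional_choice (fun i (y : pt) => y *m frame_mx o E = 'e_i)) => i.
  have [y Ey] := surj (o + 'e_i); exists y.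
  by apply: (addIr o); rewrite -frame_ptE -Ey addrC.
suff /mulmx1_unit [] : (\matrix_i inv i) *m frame_mx o E = 1%:M by [].
by apply/row_matrixP => i; rewrite row_mul rowK row1 Hinv.
Qed.

Lemma frame_pt_inj o E : (forall x, exists y, x = frame_pt o E y) -> injective (frame_pt o E).
Proof.
move=> surj y y'; rewrite !frame_ptE => /addIr E1.
by rewrite -(mulmxK (frame_mx_unit surj) y) E1 mulmxK // frame_mx_unit.
Qed.

Lemma frame_pt_bij o E : (forall x, exists y, x = frame_pt o E y) -> bijective (frame_pt o E).
Proof.
move=> surj; have [inv Hinv] := functional_choice (fun x y => x = frame_pt o E y) surj.
exists inv => [y|x]; last by rewrite -Hinv.
by apply: (frame_pt_inj surj); rewrite -Hinv.
Qed.

Definition unit_pt (j : nat) : pt := \row_(i < d) ((i : nat) == j)%:R.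

Lemma frame_pt_unit y : frame_pt 0 unit_pt y = y.
Proof.
rewrite /frame_pt add0r; apply/rowP => j; rewrite summxE (bigD1 j) //= big1 ?addr0.
  by rewrite !mxE subr0 eqxx mulr1.
by move=> i /negbTE ij; rewrite !mxE subr0 (inj_eq val_inj) eq_sym ij mulr0.
Qed.

Lemma frame_pt_row o E (lam : nat -> F) :
  frame_pt o E (\row_(j < d) lam j) = o + \sum_(i < d) lam i *: (E i - o).
Proof. by rewrite /frame_pt; congr (_ + _); apply: eq_bigr => i _; rewrite mxE. Qed.

Definition coord_seq m (y : 'I_m -> pt) (v : nat) : F :=
  if (insub (v %/ d)%N, insub (v %% d)%N) is (Some k, Some i) then y k 0 i else 0.

Lemma coord_seqE m (y : 'I_m -> pt) (k : 'I_m) (i : 'I_d) : coord_seq y (k * d + i)%N = y k 0 i.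
Proof.
have d_gt0 : (0 < d)%N by apply: leq_ltn_trans (ltn_ord i).
by rewrite /coord_seq divnMDl // modnMDl divn_small // modn_small // addn0 !valK.
Qed.

Definition frame_at O o E (e : nat -> pt) :=
  e O = o /\ forall i, (i < d)%N -> e (O.+1 + i)%N = E i.

Lemma frame_at_unit O o E e : (0 < d)%N -> frame_at O o E e -> e O.+1 = E 0%N.
Proof. by move=> d_gt0 [_ eE]; rewrite -[O.+1]addn0 eE. Qed.

End Frames.

Arguments unit_pt {F d} j.

Lemma frame_pt_unit_id (F : fieldType) (d : nat) : frame_pt 0 (@unit_pt F d) = id.
Proof. by apply: functional_extensionality => y; rewrite frame_pt_unit. Qed.

Lemma Aut_id (F : fieldType) (d : nat) (G : geometry F d) : Aut G id.
Proof. by split=> //; exists id. Qed.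

Lemma AffAut_frame (F : fieldType) (d : nat) (G : geometry F d) (o : 'rV[F]_d) E :
  (forall x, exists y, x = frame_pt o E y) ->
  (forall (i : gI G) (y : 'I_(gar i) -> 'rV[F]_d), grel (frame_pt o E \o y) <-> grel y) ->
  AffAut G (frame_pt o E).
Proof.
move=> surj Hrel; split.
  by split=> [|i y]; [exact: frame_pt_bij | rewrite Hrel].
by exists (frame_mx o E), o; split; [exact: frame_mx_unit | exact: frame_ptE].
Qed.

Section GformSemantics.
Variables (F : fieldType) (d : nat) (G : geometry F d).
Local Notation pt := 'rV[F]_d.
Local Notation gf := (gform (@gar F d G)).
Implicit Types (e : nat -> pt) (A B C : gf).

Lemma sem_and e A B P Q : (gholds e A <-> P) -> (gholds e B <-> Q) ->
  (gholds e (GAnd A B) <-> P /\ Q).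
Proof. by move=> HA HB; rewrite gholds_and HA HB. Qed.

Lemma sem_or e A B P Q : (gholds e A <-> P) -> (gholds e B <-> Q) ->
  (gholds e (GOr A B) <-> P \/ Q).
Proof. by move=> HA HB; rewrite gholds_or HA HB. Qed.

Lemma sem_not e A P : (gholds e A <-> P) -> (gholds e (GNot A) <-> ~ P).
Proof. by move=> HA; rewrite /= HA. Qed.

Lemma sem_ex e n A (P : pt -> Prop) : (forall x, gholds (upd e n x) A <-> P x) ->
  (gholds e (GEx n A) <-> exists x, P x).
Proof. by move=> HA; rewrite gholds_ex; split=> -[x /HA]; exists x. Qed.

Lemma sem_eq e x y p q : e x = p -> e y = q -> (gholds e (GEq x y : gf) <-> p = q).
Proof. by move=> <- <-. Qed.

Lemma gholds_let2 e N p q A B C :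
  (forall x y, gholds (upd (upd e N x) N.+1 y) A <-> x = p) ->
  (forall x y, gholds (upd (upd e N x) N.+1 y) B <-> y = q) ->
  gholds e (GEx N (GEx N.+1 (GAnd A (GAnd B C)))) <-> gholds (upd (upd e N p) N.+1 q) C.
Proof.
move=> HA HB; rewrite gholds_ex; split=> [[x]|HC].
  by rewrite gholds_ex => -[y]; rewrite !gholds_and HA HB => -[-> [-> ?]].
by exists p; rewrite gholds_ex; exists q; rewrite !gholds_and HA HB.
Qed.

End GformSemantics.

(* The reading of [FLe] in [fholds]. *)
Definition fle (T : Type) (ole : option (rel T)) (x y : T) : Prop :=
  if ole is Some le then le x y else False.

Lemma bounded_choice (T : Type) (x0 : T) M (P : nat -> T -> Prop) :
  (forall v, (v < M)%N -> exists x, P v x) ->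
  exists f : nat -> T, forall v, (v < M)%N -> P v (f v).
Proof.
move=> H; apply: (functional_choice (fun v x => (v < M)%N -> P v x)) => v.
by case: (ltnP v M) => [/H [x Hx]|hv]; [exists x | exists x0; lia].
Qed.

Section Interpretation.
Variables (F : fieldType) (d : nat) (G' : geometry F d).
Local Notation pt := 'rV[F]_d.
Local Notation gf := (gform (@gar F d G')).
Local Notation Col := (@Col F d).

(* Formulas take as first argument a bound [N] on their free variables; they
   use [N], [N.+1], ... as bound variables. *)
Variable colf : nat -> nat -> nat -> nat -> gf.
Hypothesis colfP : forall N a b c e, (a < N)%N -> (b < N)%N -> (c < N)%N ->
  (gholds e (colf N a b c) <-> Col (e a) (e b) (e c)).

Lemma sem_col N a b c e p q r : (a < N)%N -> (b < N)%N -> (c < N)%N ->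
  e a = p -> e b = q -> e c = r -> (gholds e (colf N a b c) <-> Col p q r).
Proof. by move=> ha hb hc <- <- <-; apply: colfP. Qed.

Ltac gsem extra := repeat first [ apply: sem_and | apply: sem_or | apply: sem_not
  | (apply: sem_ex => ?) | apply: sem_eq | apply: sem_col | extra
  | (upd_simpl; first [reflexivity | assumption]) | lia ].

Definition inplane_f N c k a b : gf :=
  GOr (GEq b c) (GEx N (GEx N.+1 (GAnd (colf N.+2 c N k)
    (GAnd (colf N.+2 c N.+1 a) (GAnd (GNot (GEq N N.+1)) (colf N.+2 N b N.+1)))))).

Lemma inplane_fP N c k a b e pc pk pa pb :
  (c < N)%N -> (k < N)%N -> (a < N)%N -> (b < N)%N ->
  e c = pc -> e k = pk -> e a = pa -> e b = pb ->
  (gholds e (inplane_f N c k a b) <-> InPlane pc pk pa pb).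
Proof. by move=> *; gsem fail. Qed.

Definition par_f N a b c k : gf :=
  GOr (GAnd (colf N c a k) (colf N c b k))
    (GAnd (GNot (colf N c a k)) (GOr (GEq b a) (GAnd (inplane_f N c k a b)
      (GNot (GEx N (GAnd (colf N.+1 c N k) (colf N.+1 a N b))))))).

Lemma par_fP N a b c k e pa pb pc pk :
  (a < N)%N -> (b < N)%N -> (c < N)%N -> (k < N)%N ->
  e a = pa -> e b = pb -> e c = pc -> e k = pk ->
  (gholds e (par_f N a b c k) <-> Par pa pb pc pk).
Proof. by move=> *; gsem ltac:(apply: inplane_fP). Qed.

Definition homothety_f N o u l x y : gf :=
  GOr (GAnd (GNot (colf N o x u)) (GAnd (colf N o y x) (par_f N l y u x)))
    (GAnd (colf N o x u) (GEx N (GEx N.+1 (GAnd (GNot (colf N.+2 o N u))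
      (GAnd (GAnd (colf N.+2 o N.+1 N) (par_f N.+2 l N.+1 u N))
            (GAnd (colf N.+2 o y u) (par_f N.+2 N.+1 y N x))))))).

Lemma homothety_fP N o u l x y e po pu pl px py :
  (o < N)%N -> (u < N)%N -> (l < N)%N -> (x < N)%N -> (y < N)%N ->
  e o = po -> e u = pu -> e l = pl -> e x = px -> e y = py ->
  (gholds e (homothety_f N o u l x y) <-> Homothety po pu pl px py).
Proof. by move=> *; gsem ltac:(apply: par_fP). Qed.

Definition pgram_f N a b c k : gf := GAnd (par_f N c k a b) (par_f N b k a c).

Lemma pgram_fP N a b c k e pa pb pc pk :
  (a < N)%N -> (b < N)%N -> (c < N)%N -> (k < N)%N ->
  e a = pa -> e b = pb -> e c = pc -> e k = pk ->
  (gholds e (pgram_f N a b c k) <-> Pgram pa pb pc pk).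
Proof. by move=> *; gsem ltac:(apply: par_fP). Qed.

Definition transl_f N a b c k : gf :=
  GOr (GAnd (GEq a b) (GEq k c)) (GOr (GAnd (GNot (colf N a c b)) (pgram_f N a b c k))
    (GAnd (GNot (GEq a b)) (GAnd (colf N a c b) (GEx N (GEx N.+1
      (GAnd (GNot (colf N.+2 a N b))
        (GAnd (pgram_f N.+2 a b N N.+1) (pgram_f N.+2 N N.+1 c k)))))))).

Lemma transl_fP N a b c k e pa pb pc pk :
  (a < N)%N -> (b < N)%N -> (c < N)%N -> (k < N)%N ->
  e a = pa -> e b = pb -> e c = pc -> e k = pk ->
  (gholds e (transl_f N a b c k) <-> Transl pa pb pc pk).
Proof. by move=> *; gsem ltac:(apply: pgram_fP). Qed.

Definition line_pt (o u : pt) (l : F) : pt := o + l *: (u - o).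

Lemma line_pt_inj o u : u <> o -> injective (line_pt o u).
Proof.
move=> uo l m /addrI/eqP; rewrite -subr_eq0 -scalerBl scaler_eq0 !subr_eq0.
by case/orP=> /eqP // /uo.
Qed.

Lemma colf_lineP N o u p e : (o < N)%N -> (u < N)%N -> (p < N)%N -> e u <> e o ->
  (gholds e (colf N o p u) <-> exists l, e p = line_pt (e o) (e u) l).
Proof. by move=> *; rewrite colfP // ColP. Qed.

Variable t0 : F.
Hypotheses (t0_neq0 : t0 != 0) (t0_neq1 : t0 != 1) (d_gt1 : (1 < d)%N).

Lemma transl_f_line N o a b c e po pu al be :
  (o < N)%N -> (a < N)%N -> (b < N)%N -> (c < N)%N -> e o = po ->
  e a = line_pt po pu al -> e b = line_pt po pu be ->
  (gholds e (transl_f N o a b c) <-> e c = line_pt po pu (al + be)).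
Proof.
move=> ho ha hb hc eo ea eb.
rewrite (transl_fP ho ha hb hc eo ea eb erefl) (TranslP t0_neq0 t0_neq1 d_gt1) /line_pt.
by split=> [E|->]; [apply: (eq_lincomb (c := 1) E) | ]; vring.
Qed.

Lemma homothety_f_line N o u a b c e po pu al :
  (o < N)%N -> (u < N)%N -> (a < N)%N -> (b < N)%N -> (c < N)%N ->
  e o = po -> e u = pu -> pu <> po -> e a = line_pt po pu al ->
  (gholds e (homothety_f N o u a b c) <-> e c = po + al *: (e b - po)).
Proof.
move=> ho hu ha hb hc eo eu uo ea.
rewrite (homothety_fP ho hu ha hb hc eo eu ea erefl erefl).
exact: (HomothetyP t0_neq0 t0_neq1 d_gt1 _ _ uo).
Qed.

Variable ole : option (rel F).
Variable lef : nat -> nat -> nat -> nat -> nat -> gf.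
Hypothesis lefP : forall N o u a b e al be,
  (o < N)%N -> (u < N)%N -> (a < N)%N -> (b < N)%N -> e u <> e o ->
  e a = line_pt (e o) (e u) al -> e b = line_pt (e o) (e u) be ->
  (gholds e (lef N o u a b) <-> fle ole al be).

(* The value of field variable [v] is the point with coordinate [lam v] on the
   line [o u], stored in the geometry variable [B + v]. *)
Fixpoint term_f B N o u (t : fterm) (z : nat) : gf :=
  match t with
  | FVar v => GEq z (B + v)
  | FZero => GEq z o
  | FOne => GEq z u
  | FAdd a b => GEx N (GEx N.+1 (GAnd (term_f B N.+2 o u a N)
      (GAnd (term_f B N.+2 o u b N.+1) (transl_f N.+2 o N N.+1 z))))
  | FMul a b => GEx N (GEx N.+1 (GAnd (term_f B N.+2 o u a N)
      (GAnd (term_f B N.+2 o u b N.+1) (homothety_f N.+2 o u N N.+1 z))))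
  end.

Fixpoint term_varbound (t : fterm) : nat :=
  match t with
  | FVar v => v.+1
  | FAdd a b | FMul a b => maxn (term_varbound a) (term_varbound b)
  | _ => 0
  end.

Lemma term_fP B M o u t N z e po pu (lam : nat -> F) :
  (term_varbound t <= M)%N -> (B + M <= N)%N -> (o < N)%N -> (u < N)%N -> (z < N)%N ->
  e o = po -> e u = pu -> pu <> po ->
  (forall v, (v < M)%N -> e (B + v) = line_pt po pu (lam v)) ->
  (gholds e (term_f B N o u t z) <-> e z = line_pt po pu (feval lam t)).
Proof.
elim: t N z e => [v|||a IHa b IHb|a IHa b IHb] N z e ht hBN ho hu hz eo eu uo Hlam;
  simpl in ht; rewrite [feval _ _]/=.
- by rewrite /= Hlam //; lia.
- by rewrite /= eo /line_pt scale0r addr0.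
- by rewrite /= eu /line_pt scale1r addrC subrK.
- rewrite (gholds_let2 (p := line_pt po pu (feval lam a)) (q := line_pt po pu (feval lam b))).
  + rewrite (transl_f_line (po := po) (pu := pu) (al := feval lam a) (be := feval lam b));
      by try lia; upd_simpl.
  + move=> x y; rewrite (IHa N.+2 N); upd_simpl;
      by [|lia|move=> v hv; upd_simpl; apply: Hlam; lia].
  + move=> x y; rewrite (IHb N.+2 N.+1); upd_simpl;
      by [|lia|move=> v hv; upd_simpl; apply: Hlam; lia].
- rewrite (gholds_let2 (p := line_pt po pu (feval lam a)) (q := line_pt po pu (feval lam b))).
  + rewrite (homothety_f_line (po := po) (pu := pu) (al := feval lam a) _ _ _ _ _ _ _ uo);
      try lia; upd_simpl => //.
    by rewrite /line_pt; split=> ->; vring.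
  + move=> x y; rewrite (IHa N.+2 N); upd_simpl;
      by [|lia|move=> v hv; upd_simpl; apply: Hlam; lia].
  + move=> x y; rewrite (IHb N.+2 N.+1); upd_simpl;
      by [|lia|move=> v hv; upd_simpl; apply: Hlam; lia].
Qed.

Lemma terms2_fP B M o u a b N e po pu (lam : nat -> F) C :
  (term_varbound a <= M)%N -> (term_varbound b <= M)%N -> (B + M <= N)%N ->
  (o < N)%N -> (u < N)%N -> e o = po -> e u = pu -> pu <> po ->
  (forall v, (v < M)%N -> e (B + v) = line_pt po pu (lam v)) ->
  gholds e (GEx N (GEx N.+1 (GAnd (term_f B N.+2 o u a N) (GAnd (term_f B N.+2 o u b N.+1) C))))
  <-> gholds (upd (upd e N (line_pt po pu (feval lam a))) N.+1 (line_pt po pu (feval lam b))) C.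
Proof.
move=> ha hb hBN ho hu eo eu uo Hlam.
apply: gholds_let2 => x y; rewrite (term_fP (M := M) (po := po) (pu := pu) (lam := lam));
  upd_simpl;
  by [|lia|move=> v hv; upd_simpl; apply: Hlam; lia].
Qed.

Fixpoint fform_f B N o u (f : fform) : gf :=
  match f with
  | FEq a b => GEx N (GEx N.+1 (GAnd (term_f B N.+2 o u a N)
      (GAnd (term_f B N.+2 o u b N.+1) (GEq N N.+1))))
  | FLe a b => GEx N (GEx N.+1 (GAnd (term_f B N.+2 o u a N)
      (GAnd (term_f B N.+2 o u b N.+1) (lef N.+2 o u N N.+1))))
  | FFalse => GFalse
  | FImp a b => GImp (fform_f B N o u a) (fform_f B N o u b)
  | FForall n a => GForall (B + n) (GImp (colf N o (B + n) u) (fform_f B N o u a))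
  end.

Fixpoint fform_varbound (f : fform) : nat :=
  match f with
  | FEq a b | FLe a b => maxn (term_varbound a) (term_varbound b)
  | FFalse => 0
  | FImp a b => maxn (fform_varbound a) (fform_varbound b)
  | FForall n a => maxn n.+1 (fform_varbound a)
  end.

Lemma fform_fP B M o u f N e po pu (lam : nat -> F) :
  (fform_varbound f <= M)%N -> (B + M <= N)%N -> (o < B)%N -> (u < B)%N ->
  e o = po -> e u = pu -> pu <> po ->
  (forall v, (v < M)%N -> e (B + v) = line_pt po pu (lam v)) ->
  (gholds e (fform_f B N o u f) <-> fholds ole lam f).
Proof.
elim: f e lam => [a b|a b||a IHa b IHb|n a IH] e lam hf hBN ho hu eo eu uo Hlam;
  simpl in hf.
- rewrite [fform_f _ _ _ _ _]/= (terms2_fP (M := M) (po := po) (pu := pu) (lam := lam)) //; try lia.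
  by rewrite /=; upd_simpl; split=> [/(line_pt_inj uo)|->].
- rewrite [fform_f _ _ _ _ _]/= (terms2_fP (M := M) (po := po) (pu := pu) (lam := lam)) //; try lia.
  by rewrite (lefP (al := feval lam a) (be := feval lam b)); upd_simpl; rewrite ?eo ?eu; try lia.
- by [].
- by rewrite /= (IHa e lam) ?(IHb e lam) //; lia.
have IHl l : gholds (upd e (B + n) (line_pt po pu l)) (fform_f B N o u a)
    <-> fholds ole (upd lam n l) a.
  apply: IH; upd_simpl; try lia; try done.
  by move=> v hv; rewrite /upd eqn_add2l; case: eqP => // _; apply: Hlam.
have on_line x : gholds (upd e (B + n) x) (colf N o (B + n) u) <-> exists l, x = line_pt po pu l.
  by rewrite colf_lineP; upd_simpl; rewrite ?eo ?eu //; lia.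
split=> H x.
  by apply/IHl/H/on_line; exists x.
by move/on_line=> [l ->]; apply/IHl/H.
Qed.

(* The frame [o; E 0, ..., E (d-1)] is stored in the variables [O, O.+1, ..., O + d];
   coordinates are points of the line [o (E 0)], stored in the variables [c i]. *)
Fixpoint coord_sum_f N O (c : nat -> nat) j s : gf :=
  if j is j'.+1 then
    GEx N (GEx N.+1 (GAnd (coord_sum_f N.+2 O c j' N)
      (GAnd (homothety_f N.+2 O O.+1 (c j') (O.+1 + j') N.+1) (transl_f N.+2 O N.+1 N s))))
  else GEq s O.

Lemma coord_sum_fP O o (E : nat -> pt) c (lam : nat -> F) j N s e :
  (O.+1 + j < N)%N -> (forall i, (i < j)%N -> (c i < N)%N) -> (s < N)%N ->
  e O = o -> e O.+1 = E 0%N -> E 0%N <> o ->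
  (forall i, (i < j)%N -> e (O.+1 + i)%N = E i) ->
  (forall i, (i < j)%N -> e (c i) = line_pt o (E 0%N) (lam i)) ->
  (gholds e (coord_sum_f N O c j s) <-> e s = o + \sum_(i < j) lam i *: (E i - o)).
Proof.
elim: j N s e => [|j IH] N s e hN hc hs eO eu uo eE ec; first by rewrite /= big_ord0 addr0 eO.
rewrite big_ord_recr [coord_sum_f _ _ _ _ _]/=.
rewrite (gholds_let2 (p := o + \sum_(i < j) lam i *: (E i - o)) (q := o + lam j *: (E j - o))).
- rewrite (transl_fP (pa := o) (pb := o + lam j *: (E j - o))
    (pc := o + \sum_(i < j) lam i *: (E i - o)) (pk := e s)); upd_simpl; try lia; try done.
  rewrite (TranslP t0_neq0 t0_neq1 d_gt1).
  by split=> [Es|->]; [apply: (eq_lincomb (c := 1) Es) |]; vring.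
- move=> x y; rewrite (IH N.+2 N); upd_simpl; try lia; try done.
  + by move=> i hi; have := hc i (leqW hi); lia.
  + by move=> i hi; upd_simpl; apply: eE; lia.
  + by move=> i hi; have hci := hc i (leqW hi); upd_simpl; apply: ec; lia.
- move=> x y; have hcj := hc j (ltnSn j).
  rewrite (homothety_f_line (po := o) (pu := E 0%N) (al := lam j)); upd_simpl;
    try lia; try done.
  + by rewrite eE.
  + by apply: ec.
Qed.

Definition line_block_f N M O body : gf :=
  GExBlock N M (GAnd (GBigAnd (iota 0 M) (fun v => colf (N + M) O (N + v) O.+1)) body).

Lemma line_block_fP N O e po pu M body :
  (O.+1 < N)%N -> e O = po -> e O.+1 = pu -> pu <> po ->
  gholds e (line_block_f N M O body) <->
  exists lam : nat -> F, gholds (upd_block e N M (fun w => line_pt po pu (lam (w - N)%N))) body.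
Proof.
move=> hN eO eu uo.
have eO' g : upd_block e N M g O = po by rewrite upd_block_out //; lia.
have eu' g : upd_block e N M g O.+1 = pu by rewrite upd_block_out //; lia.
have on_line g v : (v < M)%N ->
    gholds (upd_block e N M g) (colf (N + M) O (N + v) O.+1) <->
    exists l, g (N + v)%N = line_pt po pu l.
  move=> hv; rewrite colf_lineP ?eO' ?eu' ?upd_block_in //; lia.
rewrite /line_block_f gholds_ex_block; split=> [[g]|[lam Hlam]].
  rewrite gholds_and gholds_bigand => -[Hon Hbody].
  have [lam Hlam] : exists lam : nat -> F, forall v, (v < M)%N ->
      g (N + v)%N = line_pt po pu (lam v).
    apply: (bounded_choice (0 : F) (P := fun v l => g (N + v)%N = line_pt po pu l)) => v hv.
    apply/on_line => //.
    by apply: Hon; rewrite mem_iota.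
  exists lam; congr (gholds _ _): Hbody; apply: functional_extensionality => w.
  rewrite /upd_block; case: ifP => // /andP [hw1 hw2].
  by rewrite -(subnKC hw1) Hlam ?addKn //; lia.
exists (fun w => line_pt po pu (lam (w - N)%N)); rewrite gholds_and gholds_bigand.
split=> // v; rewrite mem_iota => hv; apply/on_line; first lia.
by exists (lam v); rewrite addKn.
Qed.

Definition rel_width (psi : fform) (m : nat) : nat := maxn (fform_varbound psi) (m * d).

(* [psi] evaluated at the frame coordinates of the points [args]. *)
Definition rel_f N O (psi : fform) m (args : 'I_m -> nat) : gf :=
  line_block_f N (rel_width psi m) O (GAnd
    (GBigAnd (enum 'I_m)
       (fun k => coord_sum_f (N + rel_width psi m) O (fun j => N + (k * d + j))%N d (args k)))
    (fform_f N (N + rel_width psi m) O O.+1 psi)).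

Section FrameAt.
Variables (O : nat) (o : pt) (E : nat -> pt).
Hypotheses (E0_neq_o : E 0%N <> o) (frame_inj : injective (frame_pt o E)).

Lemma rel_f_body N psi m (args : 'I_m -> nat) (y : 'I_m -> pt) lam e :
  (O.+1 + d <= N)%N -> (forall k, (args k < N)%N) -> frame_at O o E e ->
  (forall k, e (args k) = frame_pt o E (y k)) ->
  let M := rel_width psi m in
  gholds (upd_block e N M (fun w => line_pt o (E 0%N) (lam (w - N)%N)))
    (GAnd (GBigAnd (enum 'I_m)
             (fun k => coord_sum_f (N + M) O (fun j => N + (k * d + j))%N d (args k)))
          (fform_f N (N + M) O O.+1 psi))
  <-> (forall k, y k = \row_(j < d) lam (k * d + j)%N) /\ fholds ole lam psi.
Proof.
move=> hN hargs [eO eE] ey M.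
have hM1 : (fform_varbound psi <= M)%N by apply: leq_maxl.
have hM2 : (m * d <= M)%N by apply: leq_maxr.
set e' := upd_block _ _ _ _.
have e'O : e' O = o by rewrite /e' upd_block_out ?eO //; lia.
have e'E i : (i < d)%N -> e' (O.+1 + i)%N = E i by move=> hi; rewrite /e' upd_block_out ?eE //; lia.
have e'u : e' O.+1 = E 0%N by rewrite -e'E ?addn0 //; lia.
have e'lam v : (v < M)%N -> e' (N + v)%N = line_pt o (E 0%N) (lam v).
  by move=> hv; rewrite /e' upd_block_in ?addKn //; lia.
have coords (k : 'I_m) : gholds e' (coord_sum_f (N + M) O (fun j => N + (k * d + j))%N d (args k))
    <-> y k = \row_(j < d) lam (k * d + j)%N.
  have hk := ltn_ord k; have hMd : (d <= M)%N by nia.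
  rewrite (coord_sum_fP (o := o) (E := E) (lam := fun j => lam (k * d + j)%N)) //; try lia.
  - rewrite /e' upd_block_out ?ey -?(frame_pt_row o E (fun j => lam (k * d + j)%N));
      last by have := hargs k; lia.
    by split=> [/frame_inj|->].
  - by move=> i hi; have := hargs k; nia.
  - by have := hargs k; lia.
  - by move=> i hi; rewrite e'lam //; nia.
rewrite gholds_and gholds_bigand (fform_fP (M := M) (po := o) (pu := E 0%N) (lam := lam));
  try lia; try done.
split=> [[Hk Hpsi]|[Hk Hpsi]]; split=> // k; first by apply/coords/Hk; rewrite mem_enum.
by move=> _; apply/coords.
Qed.

Lemma rel_fP N psi m (args : 'I_m -> nat) (y : 'I_m -> pt) e (Q : ('I_m -> pt) -> Prop) :
  (O.+1 + d <= N)%N -> (forall k, (args k < N)%N) -> frame_at O o E e ->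
  (forall k, e (args k) = frame_pt o E (y k)) ->
  (forall lam, Q (fun k => \row_(j < d) lam (k * d + j)%N) <-> fholds ole lam psi) ->
  gholds e (rel_f N O psi args) <-> Q y.
Proof.
move=> hN hargs fe ey hQ; have body lam := @rel_f_body N psi m args y lam e hN hargs fe ey.
rewrite /rel_f (line_block_fP (po := o) (pu := E 0%N)) ?(frame_at_unit (ltnW d_gt1) fe) //; try lia;
  last by case: fe.
have row_coord_seq : (fun k : 'I_m => \row_(j < d) coord_seq y (k * d + j)%N) = y.
  by apply: functional_extensionality => k; apply/rowP => j; rewrite mxE coord_seqE.
split=> [[lam /body [Ey Hpsi]]|HQ].
  have -> : y = (fun k => \row_(j < d) lam (k * d + j)%N) by apply: functional_extensionality.
  exact/hQ.
exists (coord_seq y); apply/body; split=> [k|]; first by rewrite -{1}row_coord_seq.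
by apply/hQ; rewrite row_coord_seq.
Qed.

End FrameAt.

Definition frame_f N O : gf :=
  GAnd (GNot (GEq O O.+1))
    (GForall N (line_block_f N.+1 d O (coord_sum_f (N.+1 + d) O (fun j => N.+1 + j)%N d N))).

Lemma frame_fP N O o E e : (O.+1 + d <= N)%N -> frame_at O o E e ->
  gholds e (frame_f N O) <-> E 0%N <> o /\ forall x, exists y, x = frame_pt o E y.
Proof.
move=> hN fe; have [eO eE] := fe; have eu := frame_at_unit (ltnW d_gt1) fe.
have point x : E 0%N <> o ->
    gholds (upd e N x) (line_block_f N.+1 d O (coord_sum_f (N.+1 + d) O (fun j => N.+1 + j)%N d N))
    <-> exists y, x = frame_pt o E y.
  move=> uo; rewrite (line_block_fP (po := o) (pu := E 0%N)); upd_simpl; try lia; try done.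
  have sum_lam lam :
      gholds (upd_block (upd e N x) N.+1 d (fun w => line_pt o (E 0%N) (lam (w - N.+1)%N)))
        (coord_sum_f (N.+1 + d) O (fun j => N.+1 + j)%N d N)
      <-> x = frame_pt o E (\row_(j < d) lam j).
    rewrite (coord_sum_fP (o := o) (E := E) (lam := lam)) ?frame_pt_row; try lia.
    all: rewrite ?upd_block_out; upd_simpl; try lia; try done.
    - by move=> i hi; rewrite upd_block_out; upd_simpl; try apply: eE; lia.
    - by move=> i hi; rewrite upd_block_in ?addKn //; lia.
  split=> [[lam /(sum_lam lam) ->]|[y Ey]]; first by exists (\row_(j < d) lam j).
  exists (coord_seq (fun _ : 'I_1 => y)); apply/(sum_lam (coord_seq (fun _ : 'I_1 => y))).
  rewrite Ey; congr frame_pt.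
  by apply/rowP => j; rewrite mxE; have := coord_seqE (fun _ : 'I_1 => y) ord0 j; rewrite mul0n.
rewrite gholds_and gholds_forall; split=> [[Hne H]|[uo surj]].
  have uo : E 0%N <> o by move=> E0; apply: Hne; rewrite /= eO eu.
  by split=> // x; apply/point/H.
by split=> [|x]; [rewrite /= eO eu => /esym | apply/point].
Qed.

Section Automorphisms.
Variables (psi' : gI G' -> fform) (O : nat) (o : pt) (E : nat -> pt).
Hypothesis psi'P : forall i lam,
  grel (fun k : 'I_(gar i) => \row_(j < d) lam (k * d + j)%N) <-> fholds ole lam (psi' i).
Hypotheses (E0_neq_o : E 0%N <> o) (frame_surj : forall x, exists y, x = frame_pt o E y).

Definition aut_rel_f N (i : gI G') : gf :=
  let args (k : 'I_(gar i)) := (N + k)%N in GIff (GRel args) (rel_f (N + gar i) O (psi' i) args).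

Definition aut_f N : gf :=
  GBigAnd (enum (gI G')) (fun i => GForallBlock N (gar i) (aut_rel_f N i)).

Lemma aut_fP N e : (O.+1 + d <= N)%N -> frame_at O o E e ->
  gholds e (aut_f N) <->
  forall (i : gI G') (y : 'I_(gar i) -> pt), grel (frame_pt o E \o y) <-> grel y.
Proof.
move=> hN [eO eE]; have frame_inj := frame_pt_inj frame_surj.
have block i (y : 'I_(gar i) -> pt) g : (forall k : 'I_(gar i), g (N + k)%N = frame_pt o E (y k)) ->
    gholds (upd_block e N (gar i) g) (aut_rel_f N i) <-> (grel (frame_pt o E \o y) <-> grel y).
  move=> Hg; have e'N (k : 'I_(gar i)) : upd_block e N (gar i) g (N + k)%N = frame_pt o E (y k).
    by rewrite upd_block_in ?Hg //; have := ltn_ord k; lia.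
  rewrite /aut_rel_f gholds_iff.
  rewrite (rel_fP E0_neq_o frame_inj (Q := @grel F d G' i) (y := y)) ?psi'P //; try lia.
  - rewrite /=; suff -> : upd_block e N (gar i) g \o (fun k : 'I_(gar i) => (N + k)%N) =
      frame_pt o E \o y by [].
    by apply: functional_extensionality => k /=; rewrite e'N.
  - by move=> k; have := ltn_ord k; lia.
  - by split=> [|j hj]; rewrite upd_block_out ?eO ?eE //; lia.
rewrite gholds_bigand; split=> [H i y|H i _].
  move: (H i (mem_enum _ i)); rewrite gholds_forall_block.
  move/(_ (fun w => if insub (w - N)%N is Some k then frame_pt o E (y k) else 0)).
  by rewrite (block i y) // => k; rewrite addKn valK.
rewrite gholds_forall_block => g.
have [y Hy] : exists y : 'I_(gar i) -> pt, forall k : 'I_(gar i), g (N + k)%N = frame_pt o E (y k).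
  apply: (functional_choice (fun (k : 'I_(gar i)) y => g (N + k)%N = frame_pt o E y)) => k.
  exact: frame_surj.
by rewrite (block i y).
Qed.

End Automorphisms.

Section Transfer.
Variables (G : geometry F d) (psi : gI G -> fform) (psi' : gI G' -> fform).
Hypothesis psiP : forall i lam,
  grel (fun k : 'I_(gar i) => \row_(j < d) lam (k * d + j)%N) <-> fholds ole lam (psi i).
Hypothesis psi'P : forall i lam,
  grel (fun k : 'I_(gar i) => \row_(j < d) lam (k * d + j)%N) <-> fholds ole lam (psi' i).

Fixpoint interp_f N O (phi : gform (@gar F d G)) : gf :=
  match phi with
  | GEq x y => GEq x y
  | GRel i args => rel_f N O (psi i) args
  | GFalse => GFalse
  | GImp a b => GImp (interp_f N O a) (interp_f N O b)
  | GForall n a => GForall n (interp_f N O a)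
  end.

Section FixedFrame.
Variables (O N : nat) (o : pt) (E : nat -> pt).
Hypotheses (E0_neq_o : E 0%N <> o) (frame_surj : forall x, exists y, x = frame_pt o E y).
Hypothesis hN : (O.+1 + d <= N)%N.

Lemma interp_fP phi e h : (gform_varbound phi <= O)%N -> frame_at O o E e ->
  (forall v, (v < O)%N -> e v = frame_pt o E (h v)) ->
  gholds e (interp_f N O phi) <-> gholds h phi.
Proof.
have frame_inj := frame_pt_inj frame_surj.
elim: phi e h => [x y|i args||a IHa b IHb|n a IH] e h hphi fe eh; simpl in hphi.
- by rewrite /= !eh; try lia; split=> [/frame_inj|->].
- rewrite [interp_f _ _ _]/= (rel_fP E0_neq_o frame_inj (Q := @grel F d G i) (y := h \o args)) //.
  + by move=> k; have := leq_trans (leq_bigmax k) hphi; lia.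
  + by move=> k; rewrite eh //; have := leq_trans (leq_bigmax k) hphi.
- by [].
- by rewrite /= (IHa e h) ?(IHb e h) //; lia.
have IHx y : gholds (upd e n (frame_pt o E y)) (interp_f N O a) <-> gholds (upd h n y) a.
  apply: IH; first lia.
  - by case: fe => eO eE; split=> [|j hj]; upd_simpl; rewrite ?eO ?eE.
  - by move=> v hv; rewrite /upd; case: eqP => // _; apply: eh.
rewrite /= -/(interp_f N O a); split=> H x; first by apply/IHx; apply: H.
by have [y ->] := frame_surj x; apply/IHx; apply: H.
Qed.

Lemma interp_f_Aut phi e : Aut G (frame_pt o E) ->
  (gform_varbound phi <= O)%N -> frame_at O o E e ->
  gholds e (interp_f N O phi) <-> gholds e phi.
Proof.
move=> AutS hphi fe; have [inv invK Kinv] := frame_pt_bij frame_surj.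
rewrite (interp_fP (h := inv \o e)) // => [|v _]; last by rewrite /= Kinv.
rewrite (gholds_Aut AutS); suff -> : frame_pt o E \o (inv \o e) = e by [].
by apply: functional_extensionality => v /=; rewrite Kinv.
Qed.

End FixedFrame.

Definition transfer_f K phi : gf :=
  GExBlock K d.+1 (GAnd (frame_f (K.+1 + d) K)
    (GAnd (aut_f psi' K (K.+1 + d)) (interp_f (K.+1 + d) K phi))).

Lemma transfer_fP n (R : ('I_n -> pt) -> Prop) K phi :
  AffAut_sup G G' -> (n <= K)%N -> (gform_varbound phi <= K)%N ->
  (forall e : nat -> pt, R (fun k : 'I_n => e k) <-> gholds e phi) ->
  forall e : nat -> pt, gholds e (transfer_f K phi) <-> R (fun k : 'I_n => e k).
Proof.
move=> AS hn hphi Hphi e; have hN : (K.+1 + d <= K.+1 + d)%N by [].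
have frame_g g : frame_at K (g K) (fun i => g (K.+1 + i)%N) (upd_block e K d.+1 g).
  by split=> [|i hi]; rewrite upd_block_in //; lia.
have R_g g : R (fun k : 'I_n => e k) <-> gholds (upd_block e K d.+1 g) phi.
  rewrite -Hphi; suff -> : (fun k : 'I_n => upd_block e K d.+1 g k) = (fun k => e k) by [].
  by apply: functional_extensionality => k; rewrite upd_block_out //; have := ltn_ord k; lia.
rewrite gholds_ex_block; split=> [[g]|HR].
  rewrite gholds_and (frame_fP hN (frame_g g)) gholds_and => -[[uo surj] [HA HI]].
  move: HA; rewrite (aut_fP psi'P uo surj hN (frame_g g)) => /(AffAut_frame surj) /AS [AutS _].
  by apply/(R_g g); rewrite -(interp_f_Aut uo surj hN AutS hphi (frame_g g)).
pose g : nat -> pt := fun w => if w == K then 0 else unit_pt (w - K.+1)%N.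
have fe : frame_at K 0 unit_pt (upd_block e K d.+1 g).
  by split=> [|i hi]; rewrite upd_block_in /g ?eqxx ?ifF ?addKn //; lia.
have uo : unit_pt 0 <> 0 :> pt.
  by move/rowP/(_ (Ordinal (ltnW d_gt1))); rewrite !mxE /= => /eqP; rewrite oner_eq0.
have surj (x : pt) : exists y, x = frame_pt 0 unit_pt y by exists x; rewrite frame_pt_unit.
have AutS : Aut G (frame_pt 0 unit_pt) by rewrite frame_pt_unit_id; exact: Aut_id.
exists g; rewrite gholds_and (frame_fP hN fe) gholds_and (aut_fP psi'P uo surj hN fe).
rewrite (interp_f_Aut uo surj hN AutS hphi fe) -R_g frame_pt_unit_id.
by split; [split=> // x; exists x | split].
Qed.

Lemma Gdefinable_transfer n (R : ('I_n -> pt) -> Prop) :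
  AffAut_sup G G' -> Gdefinable G R -> Gdefinable G' R.
Proof.
move=> AS [phi Hphi]; exists (transfer_f (maxn n (gform_varbound phi)) phi).
by move=> e; rewrite (transfer_fP AS _ _ Hphi) // ?leq_maxl ?leq_maxr.
Qed.

End Transfer.

End Interpretation.

Section Assembly.
Variables (F : fieldType) (d : nat).
Local Notation pt := 'rV[F]_d.

Lemma Aut_sup_of_Co_sub (G G' : geometry F d) : Co_sub G G' -> Aut_sup G G'.
Proof.
move=> HC f Hf; split; first exact: Hf.1.
move=> i args; case: (posnP (gar i)) => [ar0|ar_gt0].
  (* [Co_sub] only speaks of arities [n >= 1]; nullary relations are fixed anyway. *)
  suff -> : f \o args = args by [].
  by apply: functional_extensionality => -[k hk]; exfalso; rewrite ar0 in hk.
have grel_def : Gdefinable G (@grel F d G i) by exists (GRel (fun k : 'I_(gar i) => nat_of_ord k)).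
have [phi Hphi] := HC _ ar_gt0 _ grel_def.
pose e (v : nat) := if insub v is Some k then args k else 0.
have eE : (fun k : 'I_(gar i) => e k) = args.
  by apply: functional_extensionality => k; rewrite /e valK.
have feE : (fun k : 'I_(gar i) => (f \o e) k) = f \o args.
  by apply: functional_extensionality => k; rewrite /= /e valK.
by rewrite -{1}eE Hphi (gholds_Aut Hf) -Hphi feE.
Qed.

Lemma Aut_sup_AffAut_sup (G G' : geometry F d) : Aut_sup G G' -> AffAut_sup G G'.
Proof. by move=> H f [Hf Af]; split=> //; apply: H. Qed.

Lemma Co_sub_iff (G G' : geometry F d) : (AffAut_sup G G' -> Co_sub G G') ->
  (Co_sub G G' <-> Aut_sup G G') /\ (Co_sub G G' <-> AffAut_sup G G').
Proof.
move=> H; have := @Aut_sup_of_Co_sub G G'; have := @Aut_sup_AffAut_sup G G'; tauto.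
Qed.

Lemma definable3_builder (G : geometry F d) (P : pt -> pt -> pt -> Prop) :
  Gdefinable G (rel3 P) ->
  exists f : nat -> nat -> nat -> nat -> gform (@gar F d G), forall N a b c e,
    (a < N)%N -> (b < N)%N -> (c < N)%N -> (gholds e (f N a b c) <-> P (e a) (e b) (e c)).
Proof.
case=> f Hf.
exists (fun N a b c => GEx N (GEx N.+1 (GEx N.+2 (GAnd (GEq N a)
  (GAnd (GEq N.+1 b) (GAnd (GEq N.+2 c) (grename (addn N) f))))))).
move=> N a b c e ha hb hc.
have shift_inj : injective (addn N) by move=> x y /eqP; rewrite eqn_add2l => /eqP.
rewrite gholds_ex; split=> [[x]|H].
  rewrite gholds_ex => -[y]; rewrite gholds_ex => -[z]; rewrite !gholds_and gholds_rename //=.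
  upd_simpl; move=> [<- [<- [<- /Hf]]]; rewrite /rel3 /= addn0 addn1 addn2; by upd_simpl.
exists (e a); rewrite gholds_ex; exists (e b); rewrite gholds_ex; exists (e c).
rewrite !gholds_and gholds_rename //=; upd_simpl; do 3 (split=> //).
by apply/Hf; rewrite /rel3 /= addn0 addn1 addn2; upd_simpl.
Qed.

Lemma FFD_formulas ole (G : geometry F d) :
  (forall i : gI G, Fdefinable_pts ole (@grel F d G i)) ->
  exists psi : gI G -> fform, forall i lam,
    grel (fun k : 'I_(gar i) => \row_(j < d) lam (k * d + j)%N) <-> fholds ole lam (psi i).
Proof.
move=> H; apply: (functional_choice (fun i f => forall lam, _ <-> fholds ole lam f)) => i.
by have [f [_ Hf]] := H i; exists f.
Qed.

End Assembly.

Section OrderedField.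
Variables (F : realFieldType) (d : nat) (G' : geometry F d).
Local Notation gf := (gform (@gar F d G')).
Local Notation ole := (Some (fun x y : F => x <= y)).
Local Notation Bw := (@Bw F (fun x y : F => x <= y) d).
Variable bwf : nat -> nat -> nat -> nat -> gf.
Hypothesis bwfP : forall N a b c e, (a < N)%N -> (b < N)%N -> (c < N)%N ->
  (gholds e (bwf N a b c) <-> Bw (e a) (e b) (e c)).

Definition col_of_bw N a b c : gf :=
  GOr (GEq c a) (GOr (bwf N a b c) (GOr (bwf N a c b) (bwf N b a c))).

Lemma col_of_bwP N a b c e : (a < N)%N -> (b < N)%N -> (c < N)%N ->
  gholds e (col_of_bw N a b c) <-> Col (e a) (e b) (e c).
Proof. by move=> ha hb hc; rewrite Col_Bw !gholds_or !bwfP. Qed.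

Lemma two_neq0 : (2 : F) != 0. Proof. by rewrite pnatr_eq0. Qed.
Lemma two_neq1 : (2 : F) != 1. Proof. by rewrite (eqr_nat F 2 1). Qed.

(* [a <= b] iff the translate [o + (b - a)] lies on the ray from [o] through [u]. *)
Definition le_of_bw N o u a b : gf :=
  GEx N (GAnd (transl_f col_of_bw N.+1 o a N b) (GOr (bwf N.+1 o N u) (bwf N.+1 o u N))).

Lemma le_of_bwP (d_gt1 : (1 < d)%N) N o u a b e al be :
  (o < N)%N -> (u < N)%N -> (a < N)%N -> (b < N)%N ->
  e u <> e o -> e a = line_pt (e o) (e u) al -> e b = line_pt (e o) (e u) be ->
  gholds e (le_of_bw N o u a b) <-> fle ole al be.
Proof.
move=> ho hu ha hb uo ea eb.
have transl_x x : (x = line_pt (e o) (e u) (be - al)) <->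
    gholds (upd e N x) (transl_f col_of_bw N.+1 o a N b).
  rewrite (transl_fP col_of_bwP _ _ _ _ erefl erefl erefl erefl); upd_simpl; try lia.
  rewrite (TranslP two_neq0 two_neq1 d_gt1) ea eb /line_pt.
  by split=> [->|E]; [|apply: (eq_lincomb (c := -1) E)]; vring.
rewrite [fle _ _ _]/= -subr_ge0 -(Bw_nonneg uo (erefl (line_pt (e o) (e u) (be - al)))).
rewrite /le_of_bw gholds_ex; split=> [[x]|H].
  rewrite gholds_and -transl_x gholds_or !bwfP; try lia.
  by upd_simpl; case=> ->.
exists (line_pt (e o) (e u) (be - al)).
by rewrite gholds_and -transl_x gholds_or !bwfP; try lia; upd_simpl.
Qed.

End OrderedField.

Lemma AffAut_sup_Co_sub_ordered (F : realFieldType) (d : nat) (G G' : geometry F d) :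
  (2 <= d)%N -> FFD (Some (fun x y : F => x <= y)) G -> FFD (Some (fun x y : F => x <= y)) G' ->
  AffAut_sup G G' -> Co_sub G G'.
Proof.
move=> d_gt1 [_ HG] [HB HG'] AS n _ R.
have [bwf bwfP] := definable3_builder HB.
have [psi psiP] := FFD_formulas HG; have [psi' psi'P] := FFD_formulas HG'.
exact: (Gdefinable_transfer (col_of_bwP bwfP) (@two_neq0 F) (@two_neq1 F) d_gt1
  (le_of_bwP bwfP d_gt1) psiP psi'P AS).
Qed.

Lemma AffAut_sup_Co_sub_field (F : fieldType) (d : nat) (G G' : geometry F d) :
  (2 <= d)%N -> (exists a b c : F, a <> b /\ a <> c /\ b <> c) ->
  FFD None G -> FFD None G' -> AffAut_sup G G' -> Co_sub G G'.
Proof.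
move=> d_gt1 [a [b [c [ab [ac bc]]]]] [_ HG] [HC HG'] AS n _ R.
have [colf colfP] := definable3_builder HC.
have ba : b - a != 0 by rewrite subr_eq0; apply/eqP/nesym.
have t0_neq0 : (c - a) / (b - a) != 0.
  by rewrite mulf_eq0 invr_eq0 (negbTE ba) orbF subr_eq0 eq_sym; apply/eqP.
have t0_neq1 : (c - a) / (b - a) != 1.
  by apply/eqP => t1; apply: bc; apply: (addIr (- a)); rewrite -[c - a](mulfVK ba) t1 mul1r.
have lefP N o u a' b' e (al be : F) : (o < N)%N -> (u < N)%N -> (a' < N)%N -> (b' < N)%N ->
    e u <> e o -> e a' = line_pt (e o) (e u) al -> e b' = line_pt (e o) (e u) be ->
    gholds e (GFalse : gform (@gar F d G')) <-> fle None al be.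
  by [].
have [psi psiP] := FFD_formulas HG; have [psi' psi'P] := FFD_formulas HG'.
exact: (Gdefinable_transfer colfP t0_neq0 t0_neq1 d_gt1 lefP psiP psi'P AS).
Qed.

Theorem theorem2 :
  (* ordered fields (realFieldType = ordered field), language + * 0 1 <= *)
  (forall (F : realFieldType) (d : nat) (G G' : geometry F d),
     (2 <= d)%N ->
     FFD (Some (fun x y : F => x <= y)) G ->
     FFD (Some (fun x y : F => x <= y)) G' ->
     (Co_sub G G' <-> Aut_sup G G') /\ (Co_sub G G' <-> AffAut_sup G G'))
  /\
  (* fields with more than two elements, language + * 0 1 *)
  (forall (F : fieldType) (d : nat) (G G' : geometry F d),
     (2 <= d)%N ->
     (exists a b c : F, a <> b /\ a <> c /\ b <> c) ->
     FFD None G ->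
     FFD None G' ->
     (Co_sub G G' <-> Aut_sup G G') /\ (Co_sub G G' <-> AffAut_sup G G')).
Proof.
split=> [F d G G' d_ge2 FFD_G FFD_G' | F d G G' d_ge2 three FFD_G FFD_G'].
  exact/Co_sub_iff/AffAut_sup_Co_sub_ordered.
exact/Co_sub_iff/AffAut_sup_Co_sub_field.
Qed.
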